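(* Let $d,k\ge 1$, let $w_1,\dots,w_k>0$ with $w_{\max}:=\max_i w_i$, and let $a_i,b_i,c_i\in\mathbb{R}^d$ ($i\in[k]$) be unit vectors. Set $T=\sum_{i\in[k]} w_i\, a_i\otimes b_i\otimes c_i$, $A=[a_1\cdots a_k]$, $B=[b_1\cdots b_k]$, $C=[c_1\cdots c_k]\in\mathbb{R}^{d\times k}$. Let $\alpha>0$ and $\alpha_0>0$ be parameters such that: (i) $\max_{i\ne j}\max\{|\langle a_i,a_j\rangle|,|\langle b_i,b_j\rangle|,|\langle c_i,c_j\rangle|\}\le \alpha/\sqrt d$; (ii) $\max\{\|A\|,\|B\|,\|C\|\}\le 1+\alpha_0\sqrt{k/d}$; (iii) $\|T\|\le \alpha_0 w_{\max}$ and, for every $j\in[k]$, $\big\|\sum_{i\ne j} w_i\langle a_i,a_j\rangle\langle b_i,b_j\rangle c_i\big\|\le \alpha\, w_{\max}\sqrt k/d$. Let $\Psi\in\mathbb{R}^{d\times d\times d}$ be any tensor, $\psi:=\|\Psi\|$, and $\hat T=T+\Psi$. Fix $j\in[k]$ and unit vectors $\hat a,\hat b$ with $\mathrm{dist}(\hat a,a_j)\le\epsilon_a$ and $\mathrm{dist}(\hat b,b_j)\le \epsilon_b$; set $\epsilon:=\max\{\epsilon_a,\epsilon_b\}$ and $$f(\epsilon;k,d):=\alpha\frac{\sqrt k}{d}+\frac{2\alpha}{\sqrt d}\Big(1+\alpha_0\sqrt{\tfrac kd}\Big)^2\epsilon+\alpha_0\epsilon^2 .$$ Suppose $w_j-w_j\epsilon^2-w_{\max}f(\epsilon;k,d)-\psi>0$.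 Let $\hat c:=\hat T(\hat a,\hat b,I)/\|\hat T(\hat a,\hat b,I)\|$. Then $$\mathrm{dist}(\hat c,c_j)\le \frac{w_{\max}f(\epsilon;k,d)+\psi}{w_j-w_j\epsilon^2-w_{\max}f(\epsilon;k,d)-\psi}.$$ Moreover, if this bound satisfies $\mathrm{dist}(\hat c,c_j)\le\epsilon$, then $\hat w:=\hat T(\hat a,\hat b,\hat c)$ satisfies $|\hat w-w_j|\le 2w_j\epsilon^2+w_{\max}f(\epsilon;k,d)+\psi$.
   Context: For a third order tensor $T\in\mathbb{R}^{d\times d\times d}$ and vectors $u,v,w$, the multilinear form is $T(u,v,w)=\sum_{i,j,l}T_{ijl}u_iv_jw_l$, and $T(u,v,I)\in\mathbb{R}^d$ is the vector with $l$-th entry $\sum_{i,j}T_{ijl}u_iv_j$ (similarly $T(I,v,w)$, $T(u,I,w)$). The tensor spectral norm is $\|T\|=\sup_{\|u\|=\|v\|=\|w\|=1}|T(u,v,w)|$. For matrices $\|\cdot\|$ is the spectral norm. For nonzero $u,v\in\mathbb{R}^d$, $\mathrm{dist}(u,v):=\sup_{z\perp u}\frac{\langle z,v\rangle}{\|z\|\|v\|}$. *)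

From Stdlib Require Import Reals Lra Lia Arith ClassicalEpsilon Classical.
Open Scope R_scope.

(* Vectors in R^n are functions nat -> R (only indices 0..n-1 matter);
   third-order tensors in R^{d x d x d} are functions nat -> nat -> nat -> R. *)

Fixpoint rsum (n : nat) (f : nat -> R) : R :=
  match n with
  | O => 0
  | S m => rsum m f + f m
  end.

(* max_{i<n} f i, with value 0 for n = 0 (only used with positive entries) *)
Fixpoint rmax (n : nat) (f : nat -> R) : R :=
  match n with
  | O => 0
  | S O => f O
  | S m => Rmax (rmax m f) (f m)
  end.

(* Supremum of a set of reals (the least upper bound when it exists);
   convention: the empty set has supremum 0. *)
Definition Rsup (E : R -> Prop) : R :=
  epsilon (inhabits 0)
    (fun l => is_lub E l \/ (~ (exists x, E x) /\ l = 0)).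

Definition dot (n : nat) (u v : nat -> R) : R := rsum n (fun l => u l * v l).
Definition vnorm (n : nat) (u : nat -> R) : R := sqrt (dot n u u).

Definition tform (d : nat) (T : nat -> nat -> nat -> R) (u v w : nat -> R) : R :=
  rsum d (fun i => rsum d (fun j => rsum d (fun l => T i j l * u i * v j * w l))).

Definition tcontr (d : nat) (T : nat -> nat -> nat -> R) (u v : nat -> R) : nat -> R :=
  fun l => rsum d (fun i => rsum d (fun j => T i j l * u i * v j)).

Definition tnorm (d : nat) (T : nat -> nat -> nat -> R) : R :=
  Rsup (fun r => exists u v w, vnorm d u = 1 /\ vnorm d v = 1 /\ vnorm d w = 1 /\
                               r = Rabs (tform d T u v w)).

(* spectral norm of the d x k matrix whose i-th column is (col i) *)
Definition opnorm (d k : nat) (col : nat -> nat -> R) : R :=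
  Rsup (fun r => exists x, vnorm k x = 1 /\
                 r = vnorm d (fun l => rsum k (fun i => col i l * x i))).

Definition vdist (d : nat) (u v : nat -> R) : R :=
  Rsup (fun r => exists z, vnorm d z <> 0 /\ dot d z u = 0 /\
                 r = dot d z v / (vnorm d z * vnorm d v)).

Definition cp_tensor (k : nat) (w : nat -> R) (a b c : nat -> nat -> R)
  : nat -> nat -> nat -> R :=
  fun i j l => rsum k (fun p => w p * a p i * b p j * c p l).

Definition fbound (alpha alpha0 eps : R) (k d : nat) : R :=
  alpha * sqrt (INR k) / INR d
  + 2 * alpha / sqrt (INR d) * (1 + alpha0 * sqrt (INR k / INR d)) ^ 2 * eps
  + alpha0 * eps ^ 2.

From Stdlib Require Import Reals Lra Lia ClassicalEpsilon Classical.
Open Scope R_scope.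

(* Write [ahat = x a_j + ta] with [x = <ahat, a_j>] and [ta] orthogonal to [a_j], so that
   [|ta| <= dist(ahat, a_j) <= eps_a] and [x^2 >= 1 - eps^2]; likewise [bhat = y b_j + tb].
   Expanding [T(ahat, bhat, I)] by multilinearity gives [w_j x y c_j] plus the contribution
   of the components [i <> j]: the vector bounded in (iii), two sums weighted by the
   incoherence (i) and controlled by the factor norms (ii), and [T(ta, tb, I)] (whose
   [j]-th term vanishes), bounded by [|T|].  Hence [That(ahat, bhat, I) = w_j x y c_j + E]
   with [|E| <= w_max f + psi], while [|w_j x y| >= w_j (1 - eps^2)].  Normalizing moves
   [c_j] by at most [|E| / |w_j x y|], and [what = |That(ahat, bhat, I)|] is within [|E|]
   of [|w_j x y|]. *)

(** * Finite sums *)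

Lemma rsum_ext n f g : (forall i, (i < n)%nat -> f i = g i) -> rsum n f = rsum n g.
Proof.
induction n as [|n IH]; intros H; simpl; auto.
rewrite IH, H; [reflexivity | lia | intros; apply H; lia].
Qed.

Lemma rsum_plus n f g : rsum n (fun i => f i + g i) = rsum n f + rsum n g.
Proof. induction n as [|n IH]; simpl; [ring | rewrite IH; ring]. Qed.

Lemma rsum_minus n f g : rsum n (fun i => f i - g i) = rsum n f - rsum n g.
Proof. induction n as [|n IH]; simpl; [ring | rewrite IH; ring]. Qed.

Lemma rsum_mult_l n c f : c * rsum n f = rsum n (fun i => c * f i).
Proof. induction n as [|n IH]; simpl; [ring | rewrite <- IH; ring]. Qed.

Lemma rsum_mult_r n c f : rsum n f * c = rsum n (fun i => f i * c).
Proof. induction n as [|n IH]; simpl; [ring | rewrite <- IH; ring]. Qed.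

Lemma rsum_le n f g : (forall i, (i < n)%nat -> f i <= g i) -> rsum n f <= rsum n g.
Proof.
induction n as [|n IH]; intros H; simpl; [lra|].
assert (f n <= g n) by (apply H; lia).
assert (rsum n f <= rsum n g) by (apply IH; intros; apply H; lia).
lra.
Qed.

Lemma rsum_zero n f : (forall i, (i < n)%nat -> f i = 0) -> rsum n f = 0.
Proof.
induction n as [|n IH]; intros H; simpl; auto.
rewrite IH, H; [ring | lia | intros; apply H; lia].
Qed.

Lemma rsum_nonneg n f : (forall i, (i < n)%nat -> 0 <= f i) -> 0 <= rsum n f.
Proof.
intros H; rewrite <- (rsum_zero n (fun _ => 0)) by auto.
apply rsum_le; auto.
Qed.

Lemma rsum_abs n f : Rabs (rsum n f) <= rsum n (fun i => Rabs (f i)).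
Proof.
induction n as [|n IH]; simpl.
- rewrite Rabs_R0; lra.
- eapply Rle_trans; [apply Rabs_triang | lra].
Qed.

Lemma rsum_swap n m F :
  rsum n (fun i => rsum m (fun p => F i p)) = rsum m (fun p => rsum n (fun i => F i p)).
Proof.
induction n as [|n IH]; simpl.
- symmetry; apply rsum_zero; auto.
- rewrite IH, <- rsum_plus; reflexivity.
Qed.

Lemma rsum_single n j f :
  (j < n)%nat -> (forall i, (i < n)%nat -> i <> j -> f i = 0) -> rsum n f = f j.
Proof.
induction n as [|n IH]; intros Hj H; [lia|]; simpl.
destruct (Nat.eq_dec j n) as [->|Hjn].
- rewrite rsum_zero; [ring | intros; apply H; lia].
- rewrite IH, (H n); [ring | lia | auto | lia | intros; apply H; lia].
Qed.

Lemma rsum_split n j f : (j < n)%nat ->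
  rsum n f = f j + rsum n (fun i => if Nat.eqb i j then 0 else f i).
Proof.
intros Hj.
assert (Hfj : f j = rsum n (fun i => if Nat.eqb i j then f i else 0)).
{ rewrite (rsum_single n j); auto.
  - rewrite Nat.eqb_refl; reflexivity.
  - intros i _ Hij; apply Nat.eqb_neq in Hij; rewrite Hij; reflexivity. }
rewrite Hfj, <- rsum_plus; apply rsum_ext; intros i _; destruct (Nat.eqb i j); ring.
Qed.

Lemma rsum_term_le n f i :
  (forall i, (i < n)%nat -> 0 <= f i) -> (i < n)%nat -> f i <= rsum n f.
Proof.
intros H Hi; rewrite (rsum_split n i f Hi).
enough (0 <= rsum n (fun p => if Nat.eqb p i then 0 else f p)) by lra.
apply rsum_nonneg; intros p Hp; destruct (Nat.eqb p i); [lra | auto].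
Qed.

Lemma rsum_prod3 d f g h K : K * rsum d f * rsum d g * rsum d h =
  rsum d (fun i => rsum d (fun j => rsum d (fun l => K * f i * g j * h l))).
Proof.
replace (K * rsum d f * rsum d g * rsum d h) with (rsum d f * (K * rsum d g * rsum d h)) by ring.
rewrite rsum_mult_r; apply rsum_ext; intros i _.
replace (f i * (K * rsum d g * rsum d h)) with (rsum d g * (K * f i * rsum d h)) by ring.
rewrite rsum_mult_r; apply rsum_ext; intros j _.
replace (g j * (K * f i * rsum d h)) with (K * f i * g j * rsum d h) by ring.
rewrite rsum_mult_l; apply rsum_ext; intros; ring.
Qed.

Lemma rmax_ge k w i : (i < k)%nat -> w i <= rmax k w.
Proof.
induction k as [|k IH]; intros Hi; [lia|].
destruct k as [|k].
- replace i with O by lia; simpl; lra.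
- change (rmax (S (S k)) w) with (Rmax (rmax (S k) w) (w (S k))).
  destruct (Nat.eq_dec i (S k)) as [->|]; [apply Rmax_r|].
  eapply Rle_trans; [apply IH; lia | apply Rmax_l].
Qed.

Lemma Rmax_le_inv x y z : Rmax x y <= z -> x <= z /\ y <= z.
Proof. intros H; split; eapply Rle_trans; [apply Rmax_l | exact H | apply Rmax_r | exact H]. Qed.

(** * Inner products *)

Lemma dot_comm n u v : dot n u v = dot n v u.
Proof. unfold dot; apply rsum_ext; intros; ring. Qed.

Lemma dot_ext n u v u' v' : (forall i, (i < n)%nat -> u i = u' i) ->
  (forall i, (i < n)%nat -> v i = v' i) -> dot n u v = dot n u' v'.
Proof. intros Hu Hv; unfold dot; apply rsum_ext; intros; rewrite Hu, Hv; auto. Qed.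

Lemma dot_sub_l n q u v x : dot n (fun l => u l - x * v l) q = dot n u q - x * dot n v q.
Proof. unfold dot; rewrite rsum_mult_l, <- rsum_minus; apply rsum_ext; intros; ring. Qed.

Lemma dot_sub_r n q u v x : dot n q (fun l => u l - x * v l) = dot n q u - x * dot n q v.
Proof. unfold dot; rewrite rsum_mult_l, <- rsum_minus; apply rsum_ext; intros; ring. Qed.

Lemma dot_lincomb_l d k (h : nat -> R) (C : nat -> nat -> R) z :
  dot d (fun l => rsum k (fun i => h i * C i l)) z = rsum k (fun i => h i * dot d (C i) z).
Proof.
unfold dot; rewrite (rsum_ext d _ (fun l => rsum k (fun i => h i * C i l * z l)))
  by (intros; apply rsum_mult_r).
rewrite rsum_swap; apply rsum_ext; intros i _.
rewrite rsum_mult_l; apply rsum_ext; intros; ring.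
Qed.

Lemma dot_self_nonneg n u : 0 <= dot n u u.
Proof. apply rsum_nonneg; intros; apply Rle_0_sqr. Qed.

Lemma vnorm_nonneg n u : 0 <= vnorm n u.
Proof. apply sqrt_pos. Qed.

Lemma vnorm_sq n u : vnorm n u * vnorm n u = dot n u u.
Proof. apply sqrt_sqrt, dot_self_nonneg. Qed.

Lemma vnorm_ext n u v : (forall i, (i < n)%nat -> u i = v i) -> vnorm n u = vnorm n v.
Proof. intros H; unfold vnorm; f_equal; apply dot_ext; auto. Qed.

Lemma vnorm_scale n c u : vnorm n (fun i => c * u i) = Rabs c * vnorm n u.
Proof.
unfold vnorm; replace (dot n (fun i => c * u i) (fun i => c * u i)) with (Rsqr c * dot n u u).
- rewrite sqrt_mult_alt, sqrt_Rsqr_abs by apply Rle_0_sqr; reflexivity.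
- unfold dot, Rsqr; rewrite rsum_mult_l; apply rsum_ext; intros; ring.
Qed.

Lemma vnorm_abs n u : vnorm n (fun i => Rabs (u i)) = vnorm n u.
Proof.
unfold vnorm, dot; f_equal; apply rsum_ext; intros.
rewrite <- Rabs_mult; apply Rabs_pos_eq, Rle_0_sqr.
Qed.

Lemma sq_coord_le_dot n u i : (i < n)%nat -> u i * u i <= dot n u u.
Proof. intros Hi; apply (rsum_term_le n (fun l => u l * u l)); auto; intros; apply Rle_0_sqr. Qed.

Lemma vnorm_eq0 n u : vnorm n u = 0 -> forall i, (i < n)%nat -> u i = 0.
Proof.
intros H i Hi; pose proof (sq_coord_le_dot n u i Hi) as Hui.
rewrite <- vnorm_sq, H in Hui; nra.
Qed.

Lemma unit_coord_le1 n u i : vnorm n u = 1 -> (i < n)%nat -> Rabs (u i) <= 1.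
Proof.
intros H Hi; pose proof (sq_coord_le_dot n u i Hi) as Hui.
rewrite <- vnorm_sq, H in Hui.
rewrite <- Rabs_R1; apply Rsqr_le_abs_0; unfold Rsqr; lra.
Qed.

Lemma quad_discr_nonpos P A Q :
  0 <= Q -> (forall t, 0 <= P + 2 * t * A + t * t * Q) -> A * A <= P * Q.
Proof.
intros HQ H; destruct (Req_dec Q 0) as [->|HQ0].
- destruct (Req_dec A 0) as [->|HA0]; [lra|].
  specialize (H (- (Rabs P + 1) / (2 * A))); exfalso.
  replace (P + 2 * (- (Rabs P + 1) / (2 * A)) * A + - (Rabs P + 1) / (2 * A) * (- (Rabs P + 1) / (2 * A)) * 0)
    with (P - (Rabs P + 1)) in H by (field; auto).
  pose proof (Rle_abs P); lra.
- specialize (H (- A / Q)).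
  replace (P + 2 * (- A / Q) * A + - A / Q * (- A / Q) * Q) with ((P * Q - A * A) / Q) in H
    by (field; auto).
  apply Rmult_le_compat_r with (r := Q) in H; [|lra].
  unfold Rdiv in H; rewrite Rmult_assoc, Rinv_l in H; lra.
Qed.

Lemma cauchy_schwarz_sq n u v : dot n u v * dot n u v <= dot n u u * dot n v v.
Proof.
apply quad_discr_nonpos; [apply dot_self_nonneg|]; intros t.
replace (dot n u u + 2 * t * dot n u v + t * t * dot n v v)
  with (dot n (fun i => u i + t * v i) (fun i => u i + t * v i)) by
  (unfold dot; rewrite !rsum_mult_l, <- !rsum_plus; apply rsum_ext; intros; ring).
apply dot_self_nonneg.
Qed.

Lemma cauchy_schwarz n u v : Rabs (dot n u v) <= vnorm n u * vnorm n v.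
Proof.
unfold vnorm; rewrite <- sqrt_mult_alt, <- sqrt_Rsqr_abs by apply dot_self_nonneg.
apply sqrt_le_1_alt, cauchy_schwarz_sq.
Qed.

Lemma vnorm_triangle n u v : vnorm n (fun i => u i + v i) <= vnorm n u + vnorm n v.
Proof.
apply Rsqr_incr_0_var; [|pose proof (vnorm_nonneg n u); pose proof (vnorm_nonneg n v); lra].
assert (Hsum : dot n (fun i => u i + v i) (fun i => u i + v i) = dot n u u + 2 * dot n u v + dot n v v)
  by (unfold dot; rewrite rsum_mult_l, <- !rsum_plus; apply rsum_ext; intros; ring).
unfold Rsqr; rewrite vnorm_sq, Hsum, <- !vnorm_sq.
pose proof (Rle_abs (dot n u v)); pose proof (cauchy_schwarz n u v); nra.
Qed.

Lemma vnorm_le_dual n x N :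
  0 <= N -> (forall z, Rabs (dot n x z) <= N * vnorm n z) -> vnorm n x <= N.
Proof.
intros HN H; specialize (H x).
rewrite <- vnorm_sq, Rabs_pos_eq in H by (apply Rmult_le_pos; apply vnorm_nonneg).
pose proof (vnorm_nonneg n x); nra.
Qed.

Lemma Rsup_lub E : (exists x, E x) -> (exists M, forall x, E x -> x <= M) -> is_lub E (Rsup E).
Proof.
intros Hne [M HM].
destruct (completeness E (ex_intro _ M HM) Hne) as [m Hm].
unfold Rsup.
destruct (epsilon_spec (inhabits 0) (fun l => is_lub E l \/ (~ (exists x, E x) /\ l = 0)))
  as [H | [H _]]; [eauto | exact H | contradiction].
Qed.

Lemma Rsup_empty E : ~ (exists x, E x) -> Rsup E = 0.
Proof.
intros Hne; unfold Rsup.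
destruct (epsilon_spec (inhabits 0) (fun l => is_lub E l \/ (~ (exists x, E x) /\ l = 0)))
  as [[_ H] | [_ H]]; [exists 0; right; auto | | exact H].
set (l := epsilon _ _) in H.
assert (l <= l - 1) by (apply H; intros x Hx; exfalso; eauto); lra.
Qed.

Lemma Rsup_upper E x : E x -> (exists M, forall y, E y -> y <= M) -> x <= Rsup E.
Proof. intros Hx Hb; apply (Rsup_lub E); eauto. Qed.

Lemma Rsup_least E M : (forall x, E x -> x <= M) -> 0 <= M -> Rsup E <= M.
Proof.
intros H HM; destruct (classic (exists x, E x)) as [Hne|Hne].
- apply (Rsup_lub E Hne); eauto.
- rewrite Rsup_empty; auto.
Qed.

(** * Tensor and operator norms *)

Lemma tform_scale d T u v w a b c :
  tform d T (fun i => a * u i) (fun i => b * v i) (fun i => c * w i) = a * b * c * tform d T u v w.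
Proof.
unfold tform; rewrite rsum_mult_l; apply rsum_ext; intros.
rewrite rsum_mult_l; apply rsum_ext; intros.
rewrite rsum_mult_l; apply rsum_ext; intros; ring.
Qed.

Lemma tform_eq0 d T u v w : (vnorm d u = 0 \/ vnorm d v = 0 \/ vnorm d w = 0) ->
  tform d T u v w = 0.
Proof.
intros H; unfold tform; apply rsum_zero; intros i Hi; apply rsum_zero; intros j Hj;
  apply rsum_zero; intros l Hl.
destruct H as [H | [H | H]]; rewrite (vnorm_eq0 _ _ H) by assumption; ring.
Qed.

Lemma tcontr_dot d T u v z : dot d (tcontr d T u v) z = tform d T u v z.
Proof.
unfold dot, tcontr, tform.
rewrite (rsum_ext d _ (fun l => rsum d (fun i => rsum d (fun j => T i j l * u i * v j * z l)))).
- rewrite rsum_swap; apply rsum_ext; intros i _; apply rsum_swap.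
- intros l _; rewrite rsum_mult_r; apply rsum_ext; intros i _; apply rsum_mult_r.
Qed.

Lemma tcontr_add d X Y u v l :
  tcontr d (fun x y z => X x y z + Y x y z) u v l = tcontr d X u v l + tcontr d Y u v l.
Proof.
unfold tcontr; rewrite <- rsum_plus; apply rsum_ext; intros.
rewrite <- rsum_plus; apply rsum_ext; intros; ring.
Qed.

Lemma tnorm_set_bounded d T : exists M, forall y,
  (exists u v w, vnorm d u = 1 /\ vnorm d v = 1 /\ vnorm d w = 1 /\
     y = Rabs (tform d T u v w)) -> y <= M.
Proof.
exists (rsum d (fun i => rsum d (fun j => rsum d (fun l => Rabs (T i j l))))).
intros y (u & v & w & Hu & Hv & Hw & ->); unfold tform.
eapply Rle_trans; [apply rsum_abs | apply rsum_le; intros i Hi].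
eapply Rle_trans; [apply rsum_abs | apply rsum_le; intros j Hj].
eapply Rle_trans; [apply rsum_abs | apply rsum_le; intros l Hl].
pose proof (unit_coord_le1 _ _ _ Hu Hi); pose proof (unit_coord_le1 _ _ _ Hv Hj);
  pose proof (unit_coord_le1 _ _ _ Hw Hl).
pose proof (Rabs_pos (T i j l)); pose proof (Rabs_pos (u i)); pose proof (Rabs_pos (v j));
  pose proof (Rabs_pos (w l)).
rewrite !Rabs_mult.
assert (Rabs (u i) * Rabs (v j) <= 1) by nra.
assert (Rabs (u i) * Rabs (v j) * Rabs (w l) <= 1) by nra.
nra.
Qed.

Lemma tnorm_bound d T u v w :
  Rabs (tform d T u v w) <= tnorm d T * vnorm d u * vnorm d v * vnorm d w.
Proof.
destruct (Req_dec (vnorm d u) 0) as [Hu|Hu];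
  [rewrite tform_eq0, Hu, Rabs_R0 by auto; lra|].
destruct (Req_dec (vnorm d v) 0) as [Hv|Hv];
  [rewrite tform_eq0, Hv, Rabs_R0 by auto; lra|].
destruct (Req_dec (vnorm d w) 0) as [Hw|Hw];
  [rewrite tform_eq0, Hw, Rabs_R0 by auto; lra|].
pose proof (vnorm_nonneg d u); pose proof (vnorm_nonneg d v); pose proof (vnorm_nonneg d w).
set (nu := vnorm d u) in *; set (nv := vnorm d v) in *; set (nw := vnorm d w) in *.
assert (Hunit : Rabs (tform d T (fun i => / nu * u i) (fun i => / nv * v i) (fun i => / nw * w i))
                <= tnorm d T).
{ apply Rsup_upper; [|apply tnorm_set_bounded].
  exists (fun i => / nu * u i), (fun i => / nv * v i), (fun i => / nw * w i).
  rewrite !vnorm_scale, !Rabs_inv, !Rabs_pos_eq by lra; fold nu nv nw.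
  repeat split; field; lra. }
rewrite tform_scale, !Rabs_mult, !Rabs_inv, !Rabs_pos_eq in Hunit by lra.
apply Rmult_le_compat_r with (r := nu * nv * nw) in Hunit;
  [|repeat apply Rmult_le_pos; lra].
replace (/ nu * / nv * / nw * Rabs (tform d T u v w) * (nu * nv * nw))
  with (Rabs (tform d T u v w)) in Hunit by (field; lra).
lra.
Qed.

Lemma tnorm_nonneg d T : (1 <= d)%nat -> 0 <= tnorm d T.
Proof.
intros Hd; set (e := fun i : nat => if Nat.eqb i 0 then 1 else 0).
assert (He : vnorm d e = 1).
{ unfold vnorm, dot; rewrite (rsum_single d 0); [| lia |].
  - unfold e; simpl; rewrite Rmult_1_l; apply sqrt_1.
  - intros i _ Hi; unfold e; apply Nat.eqb_neq in Hi; rewrite Hi; ring. }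
apply Rle_trans with (Rabs (tform d T e e e)); [apply Rabs_pos|].
apply Rsup_upper; [exists e, e, e; auto | apply tnorm_set_bounded].
Qed.

Lemma tcontr_vnorm_le d T u v : (1 <= d)%nat ->
  vnorm d (tcontr d T u v) <= tnorm d T * vnorm d u * vnorm d v.
Proof.
intros Hd; apply vnorm_le_dual.
- pose proof (tnorm_nonneg d T Hd); pose proof (vnorm_nonneg d u); pose proof (vnorm_nonneg d v).
  repeat apply Rmult_le_pos; auto.
- intros z; rewrite tcontr_dot; apply tnorm_bound.
Qed.

Lemma opnorm_set_bounded d k col : exists M, forall y,
  (exists x, vnorm k x = 1 /\ y = vnorm d (fun l => rsum k (fun i => col i l * x i))) -> y <= M.
Proof.
exists (sqrt (rsum d (fun l => rsum k (fun i => Rabs (col i l)) * rsum k (fun i => Rabs (col i l))))).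
intros y (x & Hx & ->); unfold vnorm, dot; apply sqrt_le_1_alt, rsum_le; intros l Hl.
set (s := rsum k (fun i => col i l * x i)); set (m := rsum k (fun i => Rabs (col i l))).
assert (Rabs s <= m).
{ eapply Rle_trans; [apply rsum_abs | apply rsum_le; intros i Hi].
  rewrite Rabs_mult; pose proof (unit_coord_le1 _ _ _ Hx Hi); pose proof (Rabs_pos (col i l)); nra. }
pose proof (Rabs_pos s).
assert (s * s = Rabs s * Rabs s) by (rewrite <- Rabs_mult, Rabs_pos_eq; nra).
nra.
Qed.

Lemma opnorm_bound d k col x :
  vnorm d (fun l => rsum k (fun i => col i l * x i)) <= opnorm d k col * vnorm k x.
Proof.
destruct (Req_dec (vnorm k x) 0) as [H0|H0].
- rewrite H0, Rmult_0_r; right; rewrite <- sqrt_0; unfold vnorm; f_equal.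
  unfold dot; apply rsum_zero; intros.
  rewrite rsum_zero; [ring | intros; rewrite (vnorm_eq0 k x H0); auto; ring].
- pose proof (vnorm_nonneg k x); set (n := vnorm k x) in *.
  assert (Hunit : vnorm d (fun l => rsum k (fun i => col i l * (/ n * x i))) <= opnorm d k col).
  { apply Rsup_upper; [|apply opnorm_set_bounded].
    exists (fun i => / n * x i); split; auto.
    rewrite vnorm_scale, Rabs_inv, Rabs_pos_eq by lra; fold n; field; lra. }
  rewrite (vnorm_ext d _ (fun l => / n * rsum k (fun i => col i l * x i))) in Hunit
    by (intros; rewrite rsum_mult_l; apply rsum_ext; intros; ring).
  rewrite vnorm_scale, Rabs_inv, Rabs_pos_eq in Hunit by lra.
  apply Rmult_le_compat_r with (r := n) in Hunit; [|lra].
  replace (/ n * vnorm d (fun l => rsum k (fun i => col i l * x i)) * n)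
    with (vnorm d (fun l => rsum k (fun i => col i l * x i))) in Hunit by (field; lra).
  exact Hunit.
Qed.

(* [fun p => dot d (col p) y] is [A^T y], and the adjoint has the same norm. *)
Lemma opnorm_transpose_bound d k col y M : opnorm d k col <= M -> 0 <= M ->
  vnorm k (fun p => dot d (col p) y) <= M * vnorm d y.
Proof.
intros HM HM0; set (q := fun p => dot d (col p) y).
set (Aq := fun l => rsum k (fun i => col i l * q i)).
assert (Hqq : dot k q q = dot d y Aq).
{ unfold Aq; rewrite (dot_comm d y).
  rewrite (dot_ext d _ _ (fun l => rsum k (fun i => q i * col i l)) y)
    by (intros; auto; apply rsum_ext; intros; ring).
  rewrite dot_lincomb_l; reflexivity. }
pose proof (cauchy_schwarz d y Aq) as HCS; pose proof (opnorm_bound d k col q) as HAq; fold Aq in HAq.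
pose proof (vnorm_nonneg k q); pose proof (vnorm_nonneg d y).
assert (vnorm k q * vnorm k q <= vnorm d y * (M * vnorm k q)).
{ rewrite vnorm_sq, Hqq; eapply Rle_trans; [apply Rle_abs|]; eapply Rle_trans; [eassumption|].
  apply Rmult_le_compat_l; auto; eapply Rle_trans; [eassumption|]; apply Rmult_le_compat_r; auto. }
destruct (Req_dec (vnorm k q) 0) as [Hq0|Hq0]; [rewrite Hq0; nra | nra].
Qed.

(** * Angles between unit vectors *)

Definition vrej (d : nat) (u v : nat -> R) : nat -> R := fun l => u l - dot d u v * v l.

Lemma dot_vrej_decomp d q u v : dot d q u = dot d u v * dot d q v + dot d q (vrej d u v).
Proof. unfold vrej; rewrite dot_sub_r; ring. Qed.

Lemma dot_vrej_orth d u v : vnorm d v = 1 -> dot d v (vrej d u v) = 0.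
Proof.
intros Hv; unfold vrej; rewrite dot_sub_r, (dot_comm d v u), <- vnorm_sq, Hv; ring.
Qed.

Lemma vrej_sq d u v : vnorm d u = 1 -> vnorm d v = 1 ->
  vnorm d (vrej d u v) * vnorm d (vrej d u v) = 1 - dot d u v * dot d u v.
Proof.
intros Hu Hv; rewrite vnorm_sq; unfold vrej at 1; rewrite dot_sub_l.
rewrite dot_vrej_orth by auto.
unfold vrej; rewrite dot_sub_r, <- (vnorm_sq d u), Hu; ring.
Qed.

Lemma vdist_set_bounded d u v : vnorm d v = 1 -> exists M, forall r,
  (exists z, vnorm d z <> 0 /\ dot d z u = 0 /\ r = dot d z v / (vnorm d z * vnorm d v)) -> r <= M.
Proof.
intros Hv; exists 1; intros r (z & Hz & _ & ->); rewrite Hv, Rmult_1_r.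
pose proof (cauchy_schwarz d z v) as HCS; rewrite Hv in HCS; pose proof (vnorm_nonneg d z).
apply Rmult_le_reg_r with (vnorm d z); [lra|].
unfold Rdiv; rewrite Rmult_assoc, Rinv_l by auto.
pose proof (Rle_abs (dot d z v)); lra.
Qed.

Lemma vdist_nonneg d u v : vnorm d v = 1 -> 0 <= vdist d u v.
Proof.
intros Hv; unfold vdist.
destruct (classic (exists r, exists z, vnorm d z <> 0 /\ dot d z u = 0 /\
            r = dot d z v / (vnorm d z * vnorm d v))) as [(r & z & Hz & Hzu & ->)|Hne].
- assert (Hopp : forall t, dot d (fun i => -1 * z i) t = - dot d z t)
    by (intros t; unfold dot; replace (- rsum d (fun l => z l * t l))
          with (-1 * rsum d (fun l => z l * t l)) by ring;
        rewrite rsum_mult_l; apply rsum_ext; intros; ring).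
  assert (Hnopp : vnorm d (fun i => -1 * z i) = vnorm d z)
    by (rewrite vnorm_scale, Rabs_left; lra).
  assert (H1 : dot d z v / (vnorm d z * vnorm d v) <= vdist d u v)
    by (apply Rsup_upper; [eauto | apply vdist_set_bounded; auto]).
  assert (H2 : dot d (fun i => -1 * z i) v / (vnorm d (fun i => -1 * z i) * vnorm d v) <= vdist d u v).
  { apply Rsup_upper; [|apply vdist_set_bounded; auto].
    exists (fun i => -1 * z i); rewrite Hnopp, Hopp, Hzu; repeat split; auto; lra. }
  rewrite Hopp, Hnopp in H2; unfold vdist in H1, H2; unfold Rdiv in *; lra.
- rewrite Rsup_empty; [lra | exact Hne].
Qed.

(* The witness is [vrej d v u]: it is orthogonal to [u] and its inner product with [v]
   is its squared norm [1 - <u, v>^2]. *)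
Lemma vrej_vnorm_le_vdist d u v : vnorm d u = 1 -> vnorm d v = 1 ->
  vnorm d (vrej d u v) <= vdist d u v.
Proof.
intros Hu Hv; set (x := dot d u v).
pose proof (vrej_sq d u v Hu Hv) as Hrej; fold x in Hrej.
assert (Hx : x * x <= 1).
{ pose proof (cauchy_schwarz_sq d u v) as H; rewrite <- !vnorm_sq, Hu, Hv in H; fold x in H; lra. }
assert (Hnrej : vnorm d (vrej d u v) = sqrt (1 - x * x)).
{ rewrite <- Hrej; symmetry; apply sqrt_square, vnorm_nonneg. }
set (z := vrej d v u).
assert (Hzz : vnorm d z * vnorm d z = 1 - x * x)
  by (unfold z; rewrite vrej_sq, dot_comm by auto; reflexivity).
assert (Hzv : dot d z v = 1 - x * x).
{ unfold z, vrej; rewrite dot_sub_l, <- vnorm_sq, Hv, dot_comm; fold x; ring. }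
destruct (Req_dec (1 - x * x) 0) as [H0|H0].
- rewrite Hnrej, H0, sqrt_0; apply vdist_nonneg; assumption.
- assert (Hsq : 0 < sqrt (1 - x * x)) by (apply sqrt_lt_R0; lra).
  assert (Hnz : vnorm d z = sqrt (1 - x * x)).
  { rewrite <- Hzz; symmetry; apply sqrt_square, vnorm_nonneg. }
  rewrite Hnrej; apply Rsup_upper; [|apply vdist_set_bounded; auto].
  exists z; split; [lra|]; split.
  + unfold z; rewrite dot_comm; apply dot_vrej_orth; auto.
  + rewrite Hzv, Hnz, Hv; rewrite <- (sqrt_sqrt (1 - x * x)) at 2 by lra; field; lra.
Qed.

Lemma vrej_small_dot_sq d u v e : vnorm d u = 1 -> vnorm d v = 1 ->
  vnorm d (vrej d u v) <= e -> 1 - e ^ 2 <= dot d u v * dot d u v.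
Proof.
intros Hu Hv He; pose proof (vrej_sq d u v Hu Hv); pose proof (vnorm_nonneg d (vrej d u v)); nra.
Qed.

Lemma unit_dot_abs_le1 d u v : vnorm d u = 1 -> vnorm d v = 1 -> Rabs (dot d u v) <= 1.
Proof. intros Hu Hv; pose proof (cauchy_schwarz d u v) as H; rewrite Hu, Hv in H; lra. Qed.

Lemma sq_lower_bound_mult x y t : t <= x * x -> t <= y * y -> t <= Rabs x * Rabs y.
Proof.
intros Hx Hy; pose proof (Rabs_pos x); pose proof (Rabs_pos y).
rewrite <- (Rabs_pos_eq (x * x)), Rabs_mult in Hx by apply Rle_0_sqr.
rewrite <- (Rabs_pos_eq (y * y)), Rabs_mult in Hy by apply Rle_0_sqr.
destruct (Rle_lt_dec t 0); [nra|].
destruct (Rle_lt_dec t (Rabs x * Rabs y)) as [|Hlt]; [assumption|].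
assert (Rabs x * Rabs y * (Rabs x * Rabs y) < t * t) by (apply Rmult_le_0_lt_compat; nra).
nra.
Qed.

Lemma weighted_dot_prod_bounds d u1 v1 u2 v2 e wj : 0 <= wj ->
  vnorm d u1 = 1 -> vnorm d v1 = 1 -> vnorm d u2 = 1 -> vnorm d v2 = 1 ->
  vnorm d (vrej d u1 v1) <= e -> vnorm d (vrej d u2 v2) <= e ->
  wj * (1 - e ^ 2) <= Rabs (wj * dot d u1 v1 * dot d u2 v2) <= wj.
Proof.
intros Hwj Hu1 Hv1 Hu2 Hv2 He1 He2.
rewrite Rmult_assoc, !Rabs_mult, (Rabs_pos_eq wj) by exact Hwj.
pose proof (unit_dot_abs_le1 d u1 v1 Hu1 Hv1); pose proof (unit_dot_abs_le1 d u2 v2 Hu2 Hv2).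
split.
- apply Rmult_le_compat_l; auto; apply sq_lower_bound_mult; apply vrej_small_dot_sq; auto.
- rewrite <- (Rmult_1_r wj) at 2; apply Rmult_le_compat_l; auto.
  rewrite <- (Rmult_1_l 1); apply Rmult_le_compat; auto using Rabs_pos.
Qed.

(** * Perturbation of a unit vector *)

Section Perturbation.

Variables (d : nat) (v c : nat -> R) (s N : R).
Hypothesis Hc : vnorm d c = 1.
Hypothesis Hres : vnorm d (fun l => v l - s * c l) <= N.

Lemma vnorm_perturb : Rabs (vnorm d v - Rabs s) <= N.
Proof.
assert (Hup : vnorm d v <= N + Rabs s).
{ rewrite (vnorm_ext d v (fun l => (v l - s * c l) + s * c l)) by (intros; ring).
  eapply Rle_trans; [apply vnorm_triangle|]; rewrite vnorm_scale, Hc; lra. }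
assert (Hlo : Rabs s <= vnorm d v + N).
{ replace (Rabs s) with (vnorm d (fun l => v l + -1 * (v l - s * c l)))
    by (rewrite (vnorm_ext d _ (fun l => s * c l)), vnorm_scale, Hc by (intros; ring); ring).
  eapply Rle_trans; [apply vnorm_triangle|]; rewrite vnorm_scale, Rabs_left by lra; lra. }
apply Rabs_le; lra.
Qed.

Hypothesis Hsmall : N < Rabs s.

Lemma vnorm_perturb_pos : 0 < vnorm d v.
Proof.
pose proof vnorm_perturb as H; pose proof (Rle_abs (- (vnorm d v - Rabs s))) as H'.
rewrite Rabs_Ropp in H'; lra.
Qed.

Lemma dot_normalize : dot d v (fun l => v l / vnorm d v) = vnorm d v.
Proof.
pose proof vnorm_perturb_pos.
unfold dot, Rdiv; rewrite (rsum_ext d _ (fun l => / vnorm d v * (v l * v l))) by (intros; ring).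
rewrite <- rsum_mult_l; fold (dot d v v); rewrite <- vnorm_sq; field; lra.
Qed.

(* For [z] orthogonal to [v], [<z, v - s c> = - s <z, c>]: the residual controls [<z, c>]. *)
Lemma vdist_normalize_le : vdist d (fun l => v l / vnorm d v) c <= N / Rabs s.
Proof.
pose proof vnorm_perturb_pos as Hv; pose proof (Rabs_pos s).
assert (HN : 0 <= N) by (eapply Rle_trans; [apply vnorm_nonneg | exact Hres]).
apply Rsup_least; [|apply Rle_mult_inv_pos; lra].
intros r (z & Hz & Hzv & ->); rewrite Hc, Rmult_1_r.
assert (Hzv0 : dot d z v = 0).
{ unfold dot, Rdiv in Hzv.
  rewrite (rsum_ext d _ (fun l => / vnorm d v * (z l * v l))), <- rsum_mult_l in Hzv by (intros; ring).
  apply Rmult_integral in Hzv as [Hinv|Hzv]; [|exact Hzv].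
  exfalso; apply (Rinv_neq_0_compat (vnorm d v)); lra. }
assert (Hzres : Rabs s * Rabs (dot d z c) <= vnorm d z * N).
{ rewrite <- Rabs_mult, <- Rabs_Ropp.
  replace (- (s * dot d z c)) with (dot d z (fun l => v l - s * c l)) by (rewrite dot_sub_r; lra).
  eapply Rle_trans; [apply cauchy_schwarz|]; apply Rmult_le_compat_l; [apply vnorm_nonneg | exact Hres]. }
pose proof (vnorm_nonneg d z) as Hz0.
assert (Hzp : 0 < vnorm d z) by lra.
apply Rmult_le_reg_r with (vnorm d z * Rabs s); [nra|].
replace (dot d z c / vnorm d z * (vnorm d z * Rabs s)) with (dot d z c * Rabs s) by (field; lra).
replace (N / Rabs s * (vnorm d z * Rabs s)) with (vnorm d z * N) by (field; lra).
pose proof (Rle_abs (dot d z c)); nra.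
Qed.

End Perturbation.

Lemma normalized_perturbation_bounds d v c s N wj e g :
  vnorm d c = 1 -> vnorm d (fun l => v l - s * c l) <= N ->
  wj * (1 - e ^ 2) <= Rabs s <= wj -> 0 < g -> g <= wj - wj * e ^ 2 - N ->
  vdist d (fun l => v l / vnorm d v) c <= N / g
  /\ Rabs (dot d v (fun l => v l / vnorm d v) - wj) <= 2 * wj * e ^ 2 + N.
Proof.
intros Hc Hres Hs Hg Hgap.
assert (HN : 0 <= N) by (eapply Rle_trans; [apply vnorm_nonneg | exact Hres]).
assert (Hsmall : N < Rabs s) by lra.
split.
- eapply Rle_trans; [apply (vdist_normalize_le d v c s N); auto|].
  apply Rmult_le_compat_l; [exact HN|]; apply Rinv_le_contravar; lra.
- rewrite (dot_normalize d v c s N) by auto.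
  pose proof (vnorm_perturb d v c s N Hc Hres) as Hv.
  replace (vnorm d v - wj) with ((vnorm d v - Rabs s) + (Rabs s - wj)) by ring.
  eapply Rle_trans; [apply Rabs_triang|].
  rewrite (Rabs_left1 (Rabs s - wj)) by lra.
  assert (0 <= wj * e ^ 2) by (apply Rmult_le_pos; [lra | apply pow2_ge_0]).
  lra.
Qed.

Lemma cp_tform_expand d k w a b c u v z : tform d (cp_tensor k w a b c) u v z =
  rsum k (fun p => w p * dot d (a p) u * dot d (b p) v * dot d (c p) z).
Proof.
unfold tform, cp_tensor.
rewrite (rsum_ext d _ (fun i => rsum k (fun p => rsum d (fun j => rsum d (fun l =>
    w p * a p i * b p j * c p l * u i * v j * z l))))).
- rewrite rsum_swap; apply rsum_ext; intros p _; unfold dot; rewrite rsum_prod3.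
  apply rsum_ext; intros i _; apply rsum_ext; intros j _; apply rsum_ext; intros; ring.
- intros i _.
  rewrite (rsum_ext d _ (fun j => rsum k (fun p => rsum d (fun l =>
      w p * a p i * b p j * c p l * u i * v j * z l)))); [apply rsum_swap|].
  intros j _; rewrite (rsum_ext d _ (fun l => rsum k (fun p =>
      w p * a p i * b p j * c p l * u i * v j * z l))); [apply rsum_swap|].
  intros l _; rewrite !rsum_mult_r; reflexivity.
Qed.

Lemma rsum_bilinear_expand k (W A B al be g : nat -> R) x y :
  rsum k (fun i => W i * (x * A i + al i) * (y * B i + be i) * g i) =
  x * y * rsum k (fun i => W i * A i * B i * g i) + x * rsum k (fun i => W i * A i * be i * g i)
  + y * rsum k (fun i => W i * B i * al i * g i) + rsum k (fun i => W i * al i * be i * g i).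
Proof. rewrite !rsum_mult_l, <- !rsum_plus; apply rsum_ext; intros; ring. Qed.

Lemma weighted_sum_bound k (h q r : nat -> R) K : 0 <= K ->
  (forall p, (p < k)%nat -> Rabs (h p) <= K) ->
  Rabs (rsum k (fun p => h p * q p * r p)) <= K * vnorm k q * vnorm k r.
Proof.
intros HK Hh; eapply Rle_trans; [apply rsum_abs|].
apply Rle_trans with (K * dot k (fun p => Rabs (q p)) (fun p => Rabs (r p))).
- unfold dot; rewrite rsum_mult_l; apply rsum_le; intros p Hp.
  rewrite !Rabs_mult, <- Rmult_assoc.
  apply Rmult_le_compat_r; [apply Rabs_pos | apply Rmult_le_compat_r; [apply Rabs_pos | auto]].
- rewrite Rmult_assoc; apply Rmult_le_compat_l; auto.
  rewrite <- (vnorm_abs k q), <- (vnorm_abs k r).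
  eapply Rle_trans; [apply Rle_abs | apply cauchy_schwarz].
Qed.

Lemma weighted_bilinear_bound d k (h : nat -> R) (Q C : nat -> nat -> R) t z K MQ MC :
  0 <= K -> (forall p, (p < k)%nat -> Rabs (h p) <= K) ->
  opnorm d k Q <= MQ -> opnorm d k C <= MC -> 0 <= MQ -> 0 <= MC ->
  Rabs (rsum k (fun p => h p * dot d (Q p) t * dot d (C p) z))
  <= K * (MQ * vnorm d t) * (MC * vnorm d z).
Proof.
intros HK Hh HQ HC HMQ HMC.
eapply Rle_trans; [apply (weighted_sum_bound k h (fun p => dot d (Q p) t) _ K); auto|].
pose proof (opnorm_transpose_bound d k Q t MQ HQ HMQ).
pose proof (opnorm_transpose_bound d k C z MC HC HMC).
apply Rmult_le_compat; auto using Rmult_le_pos, vnorm_nonneg.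
apply Rmult_le_compat_l; auto.
Qed.

Lemma Rabs_bilinear_expand_le x y s1 s2 s3 s4 : Rabs x <= 1 -> Rabs y <= 1 ->
  Rabs (x * y * s1 + x * s2 + y * s3 + s4) <= Rabs s1 + Rabs s2 + Rabs s3 + Rabs s4.
Proof.
intros Hx Hy.
pose proof (Rabs_triang (x * y * s1 + x * s2 + y * s3) s4).
pose proof (Rabs_triang (x * y * s1 + x * s2) (y * s3)).
pose proof (Rabs_triang (x * y * s1) (x * s2)).
rewrite !Rabs_mult in *.
pose proof (Rabs_pos x); pose proof (Rabs_pos y); pose proof (Rabs_pos s1);
  pose proof (Rabs_pos s2); pose proof (Rabs_pos s3).
assert (Rabs x * Rabs y <= 1) by nra.
nra.
Qed.

(** * The residual of one step of alternating power iteration *)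

Section Residual.

Variables (d k : nat) (w : nat -> R) (a b c : nat -> nat -> R) (j : nat).
Variables (mu M tau rho : R) (ahat bhat : nat -> R) (ea eb : R).

Hypothesis Hd : (1 <= d)%nat.
Hypothesis Hj : (j < k)%nat.
Hypothesis Hw : forall i, (i < k)%nat -> 0 <= w i.
Hypothesis Haj : vnorm d (a j) = 1.
Hypothesis Hbj : vnorm d (b j) = 1.
Hypothesis Hmu : 0 <= mu.
Hypothesis Hinc_a : forall i, (i < k)%nat -> i <> j -> Rabs (dot d (a i) (a j)) <= mu.
Hypothesis Hinc_b : forall i, (i < k)%nat -> i <> j -> Rabs (dot d (b i) (b j)) <= mu.
Hypothesis HM : 0 <= M.
Hypothesis Hop_a : opnorm d k a <= M.
Hypothesis Hop_b : opnorm d k b <= M.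
Hypothesis Hop_c : opnorm d k c <= M.
Hypothesis HT : tnorm d (cp_tensor k w a b c) <= tau.
Hypothesis Hcross : vnorm d (fun l => rsum k (fun i => if Nat.eqb i j then 0
                      else w i * dot d (a i) (a j) * dot d (b i) (b j) * c i l)) <= rho.
Hypothesis Hahat : vnorm d ahat = 1.
Hypothesis Hbhat : vnorm d bhat = 1.
Hypothesis Hea : vnorm d (vrej d ahat (a j)) <= ea.
Hypothesis Heb : vnorm d (vrej d bhat (b j)) <= eb.

Let x := dot d ahat (a j).
Let y := dot d bhat (b j).
Let W i := if Nat.eqb i j then 0 else w i.

Lemma cp_residual_dot z :
  dot d (fun l => tcontr d (cp_tensor k w a b c) ahat bhat l - w j * x * y * c j l) z =
  x * y * rsum k (fun i => W i * dot d (a i) (a j) * dot d (b i) (b j) * dot d (c i) z)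
  + x * rsum k (fun i => W i * dot d (a i) (a j) * dot d (b i) (vrej d bhat (b j)) * dot d (c i) z)
  + y * rsum k (fun i => W i * dot d (b i) (b j) * dot d (a i) (vrej d ahat (a j)) * dot d (c i) z)
  + tform d (cp_tensor k w a b c) (vrej d ahat (a j)) (vrej d bhat (b j)) z.
Proof.
set (ta := vrej d ahat (a j)); set (tb := vrej d bhat (b j)).
assert (Hoff : rsum k (fun p => if Nat.eqb p j then 0
                 else w p * dot d (a p) ahat * dot d (b p) bhat * dot d (c p) z)
  = rsum k (fun i => W i * (x * dot d (a i) (a j) + dot d (a i) ta)
                         * (y * dot d (b i) (b j) + dot d (b i) tb) * dot d (c i) z)).
{ apply rsum_ext; intros i _; unfold W.
  rewrite (dot_vrej_decomp d (a i) ahat (a j)), (dot_vrej_decomp d (b i) bhat (b j)).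
  unfold x, y, ta, tb; destruct (Nat.eqb i j); ring. }
assert (Hdiag : rsum k (fun i => W i * dot d (a i) ta * dot d (b i) tb * dot d (c i) z)
  = tform d (cp_tensor k w a b c) ta tb z).
{ rewrite cp_tform_expand, (rsum_split k j (fun p => w p * _ * _ * _)) by exact Hj.
  replace (dot d (a j) ta) with 0 by (symmetry; apply dot_vrej_orth, Haj).
  rewrite Rmult_0_r, !Rmult_0_l, Rplus_0_l.
  apply rsum_ext; intros i _; unfold W; destruct (Nat.eqb i j); ring. }
rewrite dot_sub_l, tcontr_dot, cp_tform_expand, (rsum_split k j) by exact Hj.
rewrite Hoff, rsum_bilinear_expand, Hdiag.
rewrite (dot_comm d (a j) ahat), (dot_comm d (b j) bhat), (dot_comm d (c j) z); fold x y.
ring.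
Qed.

Let wmax := rmax k w.

Lemma offdiag_coef_bound (P : nat -> nat -> R) :
  (forall i, (i < k)%nat -> i <> j -> Rabs (dot d (P i) (P j)) <= mu) ->
  forall i, (i < k)%nat -> Rabs (W i * dot d (P i) (P j)) <= wmax * mu.
Proof.
intros HP i Hi; unfold W; destruct (Nat.eqb_spec i j) as [->|Hij].
- rewrite Rmult_0_l, Rabs_R0; apply Rmult_le_pos; [|exact Hmu].
  eapply Rle_trans; [apply Hw, Hj | apply rmax_ge, Hj].
- rewrite Rabs_mult, (Rabs_pos_eq (w i)) by auto.
  apply Rmult_le_compat; auto using Rabs_pos; apply rmax_ge, Hi.
Qed.

Lemma cross_term_bound z :
  Rabs (rsum k (fun i => W i * dot d (a i) (a j) * dot d (b i) (b j) * dot d (c i) z))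
  <= rho * vnorm d z.
Proof.
rewrite <- dot_lincomb_l; eapply Rle_trans; [apply cauchy_schwarz|].
apply Rmult_le_compat_r; [apply vnorm_nonneg|].
rewrite <- Hcross; right; apply vnorm_ext; intros l _; apply rsum_ext; intros i _.
unfold W; destruct (Nat.eqb i j); ring.
Qed.

Lemma rejection_term_bound (P Q : nat -> nat -> R) t e z :
  (forall i, (i < k)%nat -> i <> j -> Rabs (dot d (P i) (P j)) <= mu) ->
  opnorm d k Q <= M -> vnorm d t <= e ->
  Rabs (rsum k (fun i => W i * dot d (P i) (P j) * dot d (Q i) t * dot d (c i) z))
  <= wmax * mu * M ^ 2 * e * vnorm d z.
Proof.
intros HP HQ Ht.
assert (Hwmax : 0 <= wmax) by (eapply Rle_trans; [apply Hw, Hj | apply rmax_ge, Hj]).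
eapply Rle_trans.
- apply (weighted_bilinear_bound d k (fun i => W i * dot d (P i) (P j)) Q c t z (wmax * mu) M M);
    auto using Rmult_le_pos, offdiag_coef_bound.
- pose proof (vnorm_nonneg d z); pose proof (vnorm_nonneg d t).
  replace (wmax * mu * M ^ 2 * e * vnorm d z) with (wmax * mu * (M * e) * (M * vnorm d z)) by ring.
  apply Rmult_le_compat_r; [nra|]; apply Rmult_le_compat_l; [nra|].
  apply Rmult_le_compat_l; auto.
Qed.

Lemma cp_residual_vnorm_le :
  vnorm d (fun l => tcontr d (cp_tensor k w a b c) ahat bhat l - w j * x * y * c j l)
  <= rho + wmax * mu * M ^ 2 * (ea + eb) + tau * (ea * eb).
Proof.
pose proof (vnorm_nonneg d (vrej d ahat (a j))); pose proof (vnorm_nonneg d (vrej d bhat (b j))).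
assert (Hwmax : 0 <= wmax) by (eapply Rle_trans; [apply Hw, Hj | apply rmax_ge, Hj]).
assert (Hrho : 0 <= rho) by (eapply Rle_trans; [apply vnorm_nonneg | exact Hcross]).
assert (Htau : 0 <= tau) by (eapply Rle_trans; [apply tnorm_nonneg, Hd | exact HT]).
pose proof (unit_dot_abs_le1 d ahat (a j) Hahat Haj).
pose proof (unit_dot_abs_le1 d bhat (b j) Hbhat Hbj).
apply vnorm_le_dual.
{ assert (0 <= ea) by lra; assert (0 <= eb) by lra.
  pose proof (pow2_ge_0 M).
  repeat apply Rplus_le_le_0_compat; repeat apply Rmult_le_pos; lra. }
intros z; rewrite cp_residual_dot.
pose proof (cross_term_bound z).
pose proof (rejection_term_bound a b (vrej d bhat (b j)) eb z Hinc_a Hop_b Heb).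
pose proof (rejection_term_bound b a (vrej d ahat (a j)) ea z Hinc_b Hop_a Hea).
assert (Rabs (tform d (cp_tensor k w a b c) (vrej d ahat (a j)) (vrej d bhat (b j)) z)
        <= tau * (ea * eb) * vnorm d z).
{ eapply Rle_trans; [apply tnorm_bound|]; pose proof (vnorm_nonneg d z).
  apply Rmult_le_compat_r; auto; rewrite <- Rmult_assoc.
  apply Rmult_le_compat; auto using Rmult_le_pos, tnorm_nonneg.
  apply Rmult_le_compat; auto using tnorm_nonneg. }
eapply Rle_trans; [apply Rabs_bilinear_expand_le; auto | nra].
Qed.

End Residual.

Lemma fbound_dominates (alpha alpha0 wmax ea eb : R) (k d : nat) :
  (1 <= d)%nat -> 0 <= alpha -> 0 <= alpha0 -> 0 <= wmax -> 0 <= ea -> 0 <= eb ->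
  alpha * wmax * sqrt (INR k) / INR d
  + wmax * (alpha / sqrt (INR d)) * (1 + alpha0 * sqrt (INR k / INR d)) ^ 2 * (ea + eb)
  + alpha0 * wmax * (ea * eb)
  <= wmax * fbound alpha alpha0 (Rmax ea eb) k d.
Proof.
intros Hd Ha Ha0 Hw Hea Heb.
assert (Hsd : 0 < sqrt (INR d)) by (apply sqrt_lt_R0, lt_0_INR; lia).
pose proof (Rmax_l ea eb); pose proof (Rmax_r ea eb); set (e := Rmax ea eb) in *.
set (K := wmax * (alpha / sqrt (INR d)) * (1 + alpha0 * sqrt (INR k / INR d)) ^ 2).
assert (HK : 0 <= K)
  by (apply Rmult_le_pos; [apply Rmult_le_pos, Rle_mult_inv_pos |apply pow2_ge_0]; auto).
unfold fbound.
replace (wmax * (alpha * sqrt (INR k) / INR d + 2 * alpha / sqrt (INR d) *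
          (1 + alpha0 * sqrt (INR k / INR d)) ^ 2 * e + alpha0 * e ^ 2))
  with (alpha * wmax * sqrt (INR k) / INR d + K * (2 * e) + alpha0 * wmax * (e * e))
  by (unfold K, Rdiv; ring).
assert (K * (ea + eb) <= K * (2 * e)) by (apply Rmult_le_compat_l; lra).
assert (alpha0 * wmax * (ea * eb) <= alpha0 * wmax * (e * e))
  by (apply Rmult_le_compat_l; [apply Rmult_le_pos | apply Rmult_le_compat]; lra).
unfold K in *; lra.
Qed.

Lemma cp_residual_fbound d k w a b c alpha alpha0 j ahat bhat ea eb :
  (1 <= d)%nat -> (j < k)%nat -> (forall i, (i < k)%nat -> 0 < w i) ->
  vnorm d (a j) = 1 -> vnorm d (b j) = 1 -> 0 < alpha -> 0 < alpha0 ->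
  (forall i i', (i < k)%nat -> (i' < k)%nat -> i <> i' ->
     Rmax (Rabs (dot d (a i) (a i')))
       (Rmax (Rabs (dot d (b i) (b i'))) (Rabs (dot d (c i) (c i'))))
     <= alpha / sqrt (INR d)) ->
  Rmax (opnorm d k a) (Rmax (opnorm d k b) (opnorm d k c))
    <= 1 + alpha0 * sqrt (INR k / INR d) ->
  tnorm d (cp_tensor k w a b c) <= alpha0 * rmax k w ->
  vnorm d (fun l => rsum k (fun i => if Nat.eqb i j then 0
             else w i * dot d (a i) (a j) * dot d (b i) (b j) * c i l))
    <= alpha * rmax k w * sqrt (INR k) / INR d ->
  vnorm d ahat = 1 -> vnorm d bhat = 1 ->
  vnorm d (vrej d ahat (a j)) <= ea -> vnorm d (vrej d bhat (b j)) <= eb ->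
  vnorm d (fun l => tcontr d (cp_tensor k w a b c) ahat bhat l
                    - w j * dot d ahat (a j) * dot d bhat (b j) * c j l)
    <= rmax k w * fbound alpha alpha0 (Rmax ea eb) k d.
Proof.
intros Hd Hj Hw Haj Hbj Hal Hal0 Hinc Hop HT Hcross Ha Hb Hea Heb.
destruct (Rmax_le_inv _ _ _ Hop) as [Hop_a [Hop_b Hop_c]%Rmax_le_inv].
pose proof (vnorm_nonneg d (vrej d ahat (a j))); pose proof (vnorm_nonneg d (vrej d bhat (b j))).
assert (0 <= rmax k w) by (apply Rle_trans with (w j); [apply Rlt_le, Hw, Hj | apply rmax_ge, Hj]).
eapply Rle_trans; [apply (cp_residual_vnorm_le d k w a b c j (alpha / sqrt (INR d))
    (1 + alpha0 * sqrt (INR k / INR d)) (alpha0 * rmax k w) (alpha * rmax k w * sqrt (INR k) / INR d)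
    ahat bhat ea eb) | apply fbound_dominates; auto; lra]; auto using Rlt_le.
- apply Rle_mult_inv_pos; [lra | apply sqrt_lt_R0, lt_0_INR; lia].
- intros i Hi Hij; apply (Rmax_le_inv _ _ _ (Hinc i j Hi Hj Hij)).
- intros i Hi Hij; apply (Rmax_le_inv _ _ _ (proj2 (Rmax_le_inv _ _ _ (Hinc i j Hi Hj Hij)))).
- pose proof (sqrt_pos (INR k / INR d)); nra.
Qed.

Theorem mainTheorem1
  (d k : nat) (w : nat -> R) (a b c : nat -> nat -> R) (alpha alpha0 : R)
  (Psi : nat -> nat -> nat -> R) (j : nat) (ahat bhat : nat -> R) (eps_a eps_b : R) :
  (1 <= d)%nat -> (1 <= k)%nat ->
  (forall i, (i < k)%nat -> 0 < w i) ->
  (forall i, (i < k)%nat -> vnorm d (a i) = 1 /\ vnorm d (b i) = 1 /\ vnorm d (c i) = 1) ->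
  0 < alpha -> 0 < alpha0 ->
  (* (i) incoherence *)
  (forall i i', (i < k)%nat -> (i' < k)%nat -> i <> i' ->
     Rmax (Rabs (dot d (a i) (a i')))
       (Rmax (Rabs (dot d (b i) (b i'))) (Rabs (dot d (c i) (c i'))))
     <= alpha / sqrt (INR d)) ->
  (* (ii) spectral norms of the factor matrices *)
  Rmax (opnorm d k a) (Rmax (opnorm d k b) (opnorm d k c))
    <= 1 + alpha0 * sqrt (INR k / INR d) ->
  (* (iii) *)
  tnorm d (cp_tensor k w a b c) <= alpha0 * rmax k w ->
  (forall j', (j' < k)%nat ->
     vnorm d (fun l => rsum k (fun i => if Nat.eqb i j' then 0
                else w i * dot d (a i) (a j') * dot d (b i) (b j') * c i l))
     <= alpha * rmax k w * sqrt (INR k) / INR d) ->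
  (j < k)%nat ->
  vnorm d ahat = 1 -> vnorm d bhat = 1 ->
  vdist d ahat (a j) <= eps_a -> vdist d bhat (b j) <= eps_b ->
  let wmax := rmax k w in
  let psi := tnorm d Psi in
  let That := fun x y z => cp_tensor k w a b c x y z + Psi x y z in
  let eps := Rmax eps_a eps_b in
  let f := fbound alpha alpha0 eps k d in
  w j - w j * eps ^ 2 - wmax * f - psi > 0 ->
  let v := tcontr d That ahat bhat in
  let chat := fun l => v l / vnorm d v in
  vdist d chat (c j) <= (wmax * f + psi) / (w j - w j * eps ^ 2 - wmax * f - psi)
  /\ (vdist d chat (c j) <= eps ->
      Rabs (tform d That ahat bhat chat - w j) <= 2 * w j * eps ^ 2 + wmax * f + psi).
Proof.
intros Hd Hk Hw Hn Hal Hal0 Hinc Hop HT Hcross Hj Ha Hb Hda Hdb wmax psi That eps f Hgap v chat.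
destruct (Hn j Hj) as (Haj & Hbj & Hcj).
assert (Hrej_a : vnorm d (vrej d ahat (a j)) <= eps_a)
  by (eapply Rle_trans; [apply vrej_vnorm_le_vdist | exact Hda]; auto).
assert (Hrej_b : vnorm d (vrej d bhat (b j)) <= eps_b)
  by (eapply Rle_trans; [apply vrej_vnorm_le_vdist | exact Hdb]; auto).
assert (Hea : eps_a <= eps) by apply Rmax_l; assert (Heb : eps_b <= eps) by apply Rmax_r.
set (s := w j * dot d ahat (a j) * dot d bhat (b j)).
assert (Hres : vnorm d (fun l => v l - s * c j l) <= wmax * f + psi).
{ rewrite (vnorm_ext d _ (fun l => (tcontr d (cp_tensor k w a b c) ahat bhat l - s * c j l)
                                  + tcontr d Psi ahat bhat l))
    by (intros; unfold v, That; rewrite tcontr_add; ring).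
  eapply Rle_trans; [apply vnorm_triangle | apply Rplus_le_compat].
  - apply cp_residual_fbound; auto.
  - pose proof (tcontr_vnorm_le d Psi ahat bhat Hd) as HP; rewrite Ha, Hb in HP; fold psi in HP; lra. }
assert (Hs : w j * (1 - eps ^ 2) <= Rabs s <= w j)
  by (apply weighted_dot_prod_bounds; auto using Rlt_le; lra).
destruct (normalized_perturbation_bounds d v (c j) s (wmax * f + psi) (w j) eps
  (w j - w j * eps ^ 2 - wmax * f - psi)) as [Hdist Hval]; auto; try lra.
(* [what] is [|v|]. *)
split; [exact Hdist | intros _; rewrite <- tcontr_dot; eapply Rle_trans; [exact Hval | lra]].
Qed.
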